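(* Let $G=(V,E)$ be a finite graph satisfying the $CDE(n,-K)$ condition for some constants $n>0$, $K>0$, and let $u:V\times[0,+\infty)\to(0,+\infty)$ be a positive solution of the heat equation $\partial_t u=\Delta u$ on $V$. Then $$\frac{\Gamma(\sqrt{u})}{u}-\frac{\partial_{t}(\sqrt{u})}{\sqrt{u}}\leq \frac{n}{2t}+\sqrt{\tfrac{1}{2}nKD_{\mu}(D_{w}+1)}\qquad\text{for all } t>0 \text{ and all vertices}.$$
   Context: Graphs: $G=(V,E)$ is a connected, locally finite graph; each edge $xy$ carries a weight $w_{xy}>0$ (possibly $w_{xy}\neq w_{yx}$), and $\mu:V\to(0,\infty)$ is a vertex measure. Write $y\sim x$ if $xy\in E$, $\deg(x)=\sum_{y\sim x}w_{xy}<\infty$, $D_\mu=\sup_{x\in V}\deg(x)/\mu(x)$, $D_w=\sup_{x\sim y}\deg(x)/w_{xy}$. The Laplacian is $\Delta f(x)=\frac{1}{\mu(x)}\sum_{y\sim x}w_{xy}(f(y)-f(x))$. The gradient forms are $2\Gamma(f,g)=\Delta(fg)-f\Delta g-g\Delta f$, $2\Gamma_2(f,g)=\Delta\Gamma(f,g)-\Gamma(f,\Delta g)-\Gamma(\Delta f,g)$, $\Gamma(f)=\Gamma(f,f)$, $\Gamma_2(f)=\Gamma_2(f,f)$. The graph satisfies $CDE(n,K)$ ($n>0$, $K\in\mathbb R$) if for every $f:V\to(0,\infty)$ and every vertex, $\widetilde\Gamma_2(f)\ge\frac1n(\Delta f)^2+K\Gamma(f)$, where $\widetilde\Gamma_2(f)=\Gamma_2(f)-\Gamma\big(f,\frac{\Gamma(f)}{f}\big)$.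 A positive solution of the heat equation on a set $U\subset V$ is a function $u:V\times[0,\infty)\to(0,\infty)$, continuously differentiable in $t$, with $\partial_t u(x,t)=\Delta u(\cdot,t)(x)$ for all $x\in U$, $t\ge 0$; here $\sqrt u$, $\Gamma(\sqrt u)$ etc. are taken at each fixed time. *)

From HB Require Import structures.
From mathcomp Require Import all_boot all_order all_algebra.
From mathcomp Require Import all_classical all_reals all_analysis.
Set Implicit Arguments. Unset Strict Implicit. Unset Printing Implicit Defensive.
Import Order.TTheory GRing.Theory Num.Theory.
Import numFieldNormedType.Exports.
Local Open Scope ring_scope.

Section GraphDefs.
Variables (R : realType) (V : finType) (adj : rel V) (w : V -> V -> R) (mu : V -> R).

Definition lap (f : V -> R) (x : V) : R :=
  (mu x)^-1 * \sum_(y | adj x y) w x y * (f y - f x).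

Definition Gam (f g : V -> R) (x : V) : R :=
  (lap (fun z => f z * g z) x - f x * lap g x - g x * lap f x) / 2.

Definition Gam2 (f g : V -> R) (x : V) : R :=
  (lap (Gam f g) x - Gam f (lap g) x - Gam (lap f) g x) / 2.

Definition Gam2t (f : V -> R) (x : V) : R :=
  Gam2 f f x - Gam f (fun z => Gam f f z / f z) x.

Definition CDE (n K : R) : Prop :=
  forall f : V -> R, (forall z, 0 < f z) ->
    forall x, (lap f x) ^+ 2 / n + K * Gam f f x <= Gam2t f x.

Definition deg (x : V) : R := \sum_(y | adj x y) w x y.

(* D_mu = sup_x deg(x)/mu(x)  (all terms are >= 0, so max with 0 is harmless) *)
Definition Dmu : R := \big[Num.max/0]_(x : V) (deg x / mu x).

Definition Dw : R := \big[Num.max/0]_(x : V) \big[Num.max/0]_(y | adj x y) (deg x / w x y).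

End GraphDefs.

(** Write [f = sqrt u]. Along the heat flow [d_t f = Δf + Γ(f)/f], so the
    left-hand side equals [H := -Δf/f], and [Φ := -2 f Δf = 2 u H] satisfies
    the Bochner-type identity [4 Γ̃₂(f) = (Δ - d_t) Φ]. Fix [0 < e < T] and let
    [(t₀, x₀)] maximise [F := 2 (t - e) H] on [[e, T] × V]. If [F(t₀, x₀) > 0],
    the maximum is interior in time, so [d_t (u (F - F(t₀, x₀))) >= 0] at
    [(t₀, x₀)] while [Δ] of the same nonpositive function is [<= 0] there.
    Hence [4 (t₀ - e) Γ̃₂(f) <= Φ] at [(t₀, x₀)], and [CDE(n, -K)] gives a
    quadratic inequality in [H]. Since [Δf <= 0] there, every neighbour
    satisfies [f y <= D_w f x], so [Γ(f) <= D_μ (D_w + 1) f² / 2], and the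
    quadratic inequality yields [H <= n / (2 (t₀ - e)) + sqrt(n K D_μ (D_w + 1) / 2)].
    Letting [e -> 0] gives the Li–Yau bound. *)

From HB Require Import structures.
From mathcomp Require Import all_boot all_order all_algebra.
From mathcomp Require Import all_classical all_reals all_analysis.
From mathcomp Require Import ring lra.
Import Order.TTheory GRing.Theory Num.Theory.
Import numFieldNormedType.Exports.
Local Open Scope classical_set_scope.
Local Open Scope ring_scope.

Section GraphCalculus.
Context {R : realType} {V : finType}.
Variables (adj : rel V) (w : V -> V -> R) (mu : V -> R).
Local Notation Lap := (lap adj w mu).
Local Notation Gamma := (Gam adj w mu).

Lemma eq_lap f g x : f =1 g -> Lap f x = Lap g x.
Proof. by move=> fg; rewrite /lap; congr (_ * _); apply: eq_bigr => y _; rewrite !fg. Qed.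

Lemma lapD f g x : Lap (fun z => f z + g z) x = Lap f x + Lap g x.
Proof. by rewrite /lap -mulrDr -big_split /=; congr (_ * _); apply: eq_bigr => y _; ring. Qed.

Lemma lapZ c f x : Lap (fun z => c * f z) x = c * Lap f x.
Proof.
rewrite /lap [RHS]mulrCA (mulr_sumr _ _ _ c); congr (_ * _); apply: eq_bigr => y _; ring.
Qed.

Lemma GamC f g x : Gamma f g x = Gamma g f x.
Proof.
rewrite /Gam (@eq_lap _ (fun z => g z * f z)) => [|z]; last exact: mulrC.
congr (_ / _); ring.
Qed.

Lemma lap_sqr f x : Lap (fun z => f z * f z) x = 2 * (f x * Lap f x + Gamma f f x).
Proof. by rewrite /Gam; field. Qed.

(* [d] is the time derivative of [f = sqrt u] along the heat flow, so this is
   [4 Γ̃₂(f) = (Δ - d_t) (-2 f Δf)]. *)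
Lemma Gam2tE f x : (forall z, f z != 0) ->
  let d z := Lap f z + Gamma f f z / f z in
  4 * Gam2t adj w mu f x =
    Lap (fun z => -2 * (f z * Lap f z)) x + 2 * (d x * Lap f x + f x * Lap d x).
Proof.
move=> f0 d; pose q z := Gamma f f z / f z.
have fq : forall z, Gamma f f z = f z * q z by move=> z; rewrite /q mulrC divfK.
rewrite /Gam2t /Gam2 -/q (@eq_lap _ _ x fq) [Gamma (Lap f) f x]GamC /d lapD lapZ -/q.
have -> : Gamma f (Lap f) x =
  (Lap (fun z => f z * Lap f z) x - f x * Lap (Lap f) x - Lap f x * Lap f x) / 2 by [].
have -> : Gamma f q x =
  (Lap (fun z => f z * q z) x - f x * Lap q x - q x * Lap f x) / 2 by [].
by rewrite -[Gamma f f x / f x]/(q x); field.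
Qed.

Lemma GamE f x :
  Gamma f f x = (mu x)^-1 * (\sum_(y | adj x y) w x y * (f y - f x) ^+ 2) / 2.
Proof.
have -> : \sum_(y | adj x y) w x y * (f y - f x) ^+ 2 =
  \sum_(y | adj x y) (w x y * (f y * f y - f x * f x) - f x * (w x y * (f y - f x))
     - f x * (w x y * (f y - f x))).
  by apply: eq_bigr => y _; ring.
rewrite !sumrB -!mulr_sumr /Gam /lap; ring.
Qed.

Hypotheses (w_gt0 : forall x y, adj x y -> 0 < w x y) (mu_gt0 : forall x, 0 < mu x).

Lemma lap_le_at g1 g2 x : (forall y, adj x y -> g1 y <= g2 y) -> g1 x = g2 x ->
  Lap g1 x <= Lap g2 x.
Proof.
move=> le12 eq12; apply: ler_wpM2l; first by rewrite invr_ge0 ltW.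
apply: ler_sum => y xy; apply: ler_wpM2l; first by rewrite ltW ?w_gt0.
by rewrite eq12 lerD2r le12.
Qed.

Lemma Dmu_ge x : deg adj w x / mu x <= Dmu adj w mu.
Proof. exact: le_bigmax. Qed.

Lemma Dw_ge x y : adj x y -> deg adj w x / w x y <= Dw adj w.
Proof. by move=> xy; apply: (bigmax_sup x) => //; apply: (bigmax_sup y). Qed.

Lemma Dw_ge0 : 0 <= Dw adj w.
Proof. exact: bigmax_ge_id. Qed.

Definition Dgam : R := Dmu adj w mu * (Dw adj w + 1) / 2.

Lemma Dgam_ge0 : 0 <= Dgam.
Proof. by rewrite divr_ge0 ?mulr_ge0 ?addr_ge0 ?Dw_ge0 //; exact: bigmax_ge_id. Qed.

Section Superharmonic.
Variables (f : V -> R) (x : V).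
Hypotheses (f_gt0 : forall z, 0 < f z) (lapf_le0 : Lap f x <= 0).

Lemma sum_weighted_le_deg : \sum_(y | adj x y) w x y * f y <= deg adj w x * f x.
Proof.
rewrite -subr_le0 /deg mulr_suml -sumrB.
move: lapf_le0; rewrite /lap pmulr_rle0 ?invr_gt0 //.
by rewrite (eq_bigr (fun y => w x y * f y - w x y * f x)) // => y _; ring.
Qed.

Lemma neighbour_le_Dw y : adj x y -> f y <= Dw adj w * f x.
Proof.
move=> xy; have wxy := w_gt0 _ _ xy.
have wfy : w x y * f y <= deg adj w x * f x.
  apply: le_trans sum_weighted_le_deg; rewrite (bigD1 y) //= lerDl.
  by apply: sumr_ge0 => z /andP[xz _]; rewrite mulr_ge0 // ltW ?w_gt0.
apply: le_trans (_ : deg adj w x / w x y * f x <= _).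
  by rewrite mulrAC ler_pdivlMr // mulrC.
by rewrite ler_pM2r // Dw_ge.
Qed.

Lemma sum_sqr_diff_le :
  \sum_(y | adj x y) w x y * (f y - f x) ^+ 2 <= (Dw adj w + 1) * deg adj w x * f x ^+ 2.
Proof.
set D := Dw adj w.
apply: le_trans (_ : \sum_(y | adj x y) (D * f x * (w x y * f y) + f x ^+ 2 * w x y) <= _).
  apply: ler_sum => y xy.
  have fy2 : f y ^+ 2 <= D * f x * f y.
    by rewrite expr2 ler_pM2r ?neighbour_le_Dw.
  have wxy := w_gt0 _ _ xy; have fx := f_gt0 x; have fy := f_gt0 y.
  have sqr_diff : (f y - f x) ^+ 2 <= D * f x * f y + f x ^+ 2 by nra.
  nra.
rewrite big_split /= -!mulr_sumr.
have : D * f x * \sum_(y | adj x y) w x y * f y <= D * f x * (deg adj w x * f x).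
  by rewrite ler_wpM2l ?sum_weighted_le_deg // mulr_ge0 ?Dw_ge0 // ltW.
rewrite /deg; set S := \sum_(y | adj x y) w x y; lra.
Qed.

Lemma Gam_le_Dgam : Gamma f f x <= Dgam * f x ^+ 2.
Proof.
have mux := mu_gt0 x.
rewrite GamE.
apply: le_trans (_ : (mu x)^-1 * ((Dw adj w + 1) * deg adj w x * f x ^+ 2) / 2 <= _).
  apply: ler_wpM2r => //; apply: ler_wpM2l; first by rewrite invr_ge0 ltW.
  exact: sum_sqr_diff_le.
have -> : (mu x)^-1 * ((Dw adj w + 1) * deg adj w x * f x ^+ 2) / 2 =
  (Dw adj w + 1) * f x ^+ 2 / 2 * (deg adj w x / mu x) by ring.
have -> : Dgam * f x ^+ 2 = (Dw adj w + 1) * f x ^+ 2 / 2 * Dmu adj w mu.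
  by rewrite /Dgam; ring.
apply: ler_wpM2l; last exact: Dmu_ge.
by rewrite divr_ge0 ?mulr_ge0 ?addr_ge0 ?Dw_ge0 ?exprn_ge0 ?ltW.
Qed.

End Superharmonic.
End GraphCalculus.

Section RealCalculus.
Context {R : realType}.
Implicit Types (f g : R -> R) (t : R).

Lemma is_derive_mul {f g t df dg} : is_derive t 1 f df -> is_derive t 1 g dg ->
  is_derive t 1 (fun s => f s * g s) (f t * dg + g t * df).
Proof. by move=> fdf gdg; have := is_deriveM fdf gdg. Qed.

Lemma is_derive_sub {f g t df dg} : is_derive t 1 f df -> is_derive t 1 g dg ->
  is_derive t 1 (fun s => f s - g s) (df - dg).
Proof. by move=> fdf gdg; have := is_deriveB fdf gdg. Qed.

Lemma is_derive_scale (c : R) {f t df} : is_derive t 1 f df ->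
  is_derive t 1 (fun s => c * f s) (c * df).
Proof.
by move=> fdf; have := is_derive_mul (is_derive_cst c t 1) fdf; rewrite mulr0 addr0.
Qed.

Lemma is_derive_sumr (I : finType) (P : pred I) (F : I -> R -> R) (dF : I -> R) t :
  (forall i, P i -> is_derive t 1 (F i) (dF i)) ->
  is_derive t 1 (fun s => \sum_(i | P i) F i s) (\sum_(i | P i) dF i).
Proof.
move=> FdF; rewrite -fct_sumE.
apply: (big_rec2 (fun d G => is_derive t 1 G d)); first exact: is_derive_cst.
by move=> i d G Pi GdG; apply: is_deriveD => //; exact: FdF.
Qed.

Lemma is_derive_sqrt_comp {f t df} : 0 < f t -> is_derive t 1 f df ->
  is_derive t 1 (fun s => Num.sqrt (f s)) (df / (2 * Num.sqrt (f t))).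
Proof. by move=> ft fdf; rewrite mulrC; exact: is_derive1_comp (is_derive1_sqrt ft) fdf. Qed.

Lemma is_derive_ge0_left_max {f} {a c df : R} : a < c -> is_derive c 1 f df ->
  (forall t, a < t -> t <= c -> f t <= f c) -> 0 <= df.
Proof.
move=> ac fdf cmax.
have fd : derivable f c 1 by case: fdf.
have <- : 'D_1 f c = df by exact: derive_val.
rewrite ['D_1 f c]cvg_at_leftE //.
apply: limr_ge.
  rewrite -(cvg_at_leftE (fun h => h^-1 *: ((f \o shift c) _ - f c))) //.
  apply: cvg_trans fd; apply: cvg_app.
  move=> A [e e_gt0 Ae]; exists e => // x xe x_gt0; apply: Ae => //.
  exact/ltr0_neq0.
near=> h; have h_lt0 : h < 0 by near: h; exists 1 => /=.
apply: mulr_le0; first by rewrite invr_le0 ltW.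
rewrite subr_le0 [_%:A]mulr1.
apply: cmax; last by rewrite /=; lra.
near: h; exists (c - a); first by rewrite /= subr_gt0.
by move=> h; rewrite /= distrC subr0 => /ltr_normlP [] + _ _ /=; lra.
Unshelve. all: by end_near. Qed.

Lemma quadratic_root_bound (n k tau h : R) : 0 < n -> 0 <= k -> 0 < tau ->
  2 * tau * h ^+ 2 / n - 2 * tau * k <= h -> h <= n / (2 * tau) + Num.sqrt (n * k).
Proof.
move=> n_gt0 k_ge0 tau_gt0 quad.
set S := Num.sqrt (n * k); set a := n / (2 * tau).
have S_ge0 : 0 <= S by exact: sqrtr_ge0.
have S2 : S ^+ 2 = n * k by rewrite sqr_sqrtr // mulr_ge0 // ltW.
have a_gt0 : 0 < a by rewrite divr_gt0 // mulr_gt0.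
have : h ^+ 2 - n * k <= a * h.
  have -> : h ^+ 2 - n * k = a * (2 * tau * h ^+ 2 / n - 2 * tau * k).
    by rewrite /a; field; rewrite !gt_eqF.
  by rewrite ler_wpM2l // ltW.
rewrite -S2 leNgt => quad'; apply/negP => h_gt.
have : 0 < h * (h - a - S) + S * (h - S).
  have : 0 < h * (h - a - S) by rewrite mulr_gt0 //; lra.
  have : 0 <= S * (h - S) by rewrite mulr_ge0 //; lra.
  lra.
have -> : h * (h - a - S) + S * (h - S) = h ^+ 2 - S ^+ 2 - a * h by ring.
lra.
Qed.

Lemma ratio_le_of_curvature_dimension {n K c tau f L G Q : R} :
  0 < n -> 0 <= K -> 0 <= c -> 0 < tau -> 0 < f -> G <= c * f ^+ 2 ->
  L ^+ 2 / n + - K * G <= Q -> 4 * tau * Q <= -2 * (f * L) ->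
  - L / f <= n / (2 * tau) + Num.sqrt (n * (K * c)).
Proof.
move=> n_gt0 K_ge0 c_ge0 tau_gt0 f_gt0 G_le cd bochner.
apply: quadratic_root_bound; rewrite ?mulr_ge0 //.
set h := - L / f.
have Lh : L = - h * f by rewrite /h; field; rewrite gt_eqF.
have KG : K * G <= K * (c * f ^+ 2) by rewrite ler_wpM2l.
have : 4 * tau * (L ^+ 2 / n - K * (c * f ^+ 2)) <= -2 * (f * L).
  apply: le_trans bochner; apply: ler_wpM2l; first by rewrite mulr_ge0 // ltW.
  lra.
rewrite -subr_le0.
have -> : 4 * tau * (L ^+ 2 / n - K * (c * f ^+ 2)) - -2 * (f * L) =
    2 * f ^+ 2 * (2 * tau * h ^+ 2 / n - 2 * tau * (K * c) - h).
  by rewrite Lh; field; rewrite gt_eqF.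
rewrite pmulr_rle0 ?mulr_gt0 ?exprn_gt0 //; lra.
Qed.

Lemma mul_div_add (a b c : R) : 0 < a -> a * (b / a + c) = b + a * c.
Proof. by move=> a_gt0; rewrite mulrDr mulrCA divff ?mulr1 // gt_eqF. Qed.

Lemma le_of_le_shifted_div (h A S T : R) : 0 < A -> 0 < T ->
  (forall e, 0 < e -> e < T -> h <= A / (T - e) + S) -> h <= A / T + S.
Proof.
move=> A_gt0 T_gt0 bound; rewrite leNgt; apply/negP => h_gt.
set d := h - S - A / T.
have d_gt0 : 0 < d by rewrite /d; lra.
have den_gt0 : 0 < 2 * A + d * T by have := mulr_gt0 d_gt0 T_gt0; lra.
pose e := T * (d * T) / (2 * A + d * T).
have e_gt0 : 0 < e by rewrite divr_gt0 // !mulr_gt0.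
have e_lt : e < T by rewrite ltr_pdivrMr // mulrDr; have := mulr_gt0 T_gt0 A_gt0; lra.
have := bound e e_gt0 e_lt.
have -> : A / (T - e) = A / T + d / 2.
  have -> : T - e = 2 * A * T / (2 * A + d * T) by rewrite /e; field; rewrite gt_eqF.
  by field; rewrite !gt_eqF ?mulr_gt0.
rewrite /d; lra.
Qed.

End RealCalculus.

Lemma is_derive_lap {R : realType} {V : finType} (adj : rel V) (w : V -> V -> R)
    (mu : V -> R) {g : R -> V -> R} {dg : V -> R} {t : R} (x : V) :
  (forall y, is_derive t 1 (fun s => g s y) (dg y)) ->
  is_derive t 1 (fun s => lap adj w mu (g s) x) (lap adj w mu dg x).
Proof.
by move=> gdg; apply: is_derive_scale; apply: is_derive_sumr.
Qed.

Section LiYau.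
Context {R : realType} {V : finType}.
Variables (adj : rel V) (w : V -> V -> R) (mu : V -> R)
  (n K : R) (u : V -> R -> R).
Hypotheses (w_gt0 : forall x y, adj x y -> 0 < w x y) (mu_gt0 : forall x, 0 < mu x)
  (n_gt0 : 0 < n) (K_gt0 : 0 < K) (cde : CDE adj w mu n (- K))
  (u_gt0 : forall x t, 0 <= t -> 0 < u x t)
  (u_heat : forall x t, 0 < t -> derivable (u x) t 1 /\
       derive1 (u x) t = lap adj w mu (fun y => u y t) x).
Local Notation Lap := (lap adj w mu).
Local Notation Gamma := (Gam adj w mu).
Implicit Types (e s t : R) (x y : V).

(* [sqrtu t], [dsqrtu t], [liyau], [phi] and [weighted_liyau e] are
   [f], [d_t f], [H], [Φ] and [F] of the header. *)
Definition sqrtu (t : R) (y : V) : R := Num.sqrt (u y t).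
Definition dsqrtu (t : R) (y : V) : R :=
  Lap (sqrtu t) y + Gamma (sqrtu t) (sqrtu t) y / sqrtu t y.
Definition liyau (t : R) (y : V) : R := - Lap (sqrtu t) y / sqrtu t y.
Definition phi (t : R) (y : V) : R := -2 * (sqrtu t y * Lap (sqrtu t) y).
Definition weighted_liyau (e t : R) (y : V) : R := 2 * (t - e) * liyau t y.

Lemma sqrtu_gt0 t y : 0 <= t -> 0 < sqrtu t y.
Proof. by move=> t_ge0; rewrite sqrtr_gt0 u_gt0. Qed.

Lemma sqrtu_neq0 t y : 0 <= t -> sqrtu t y != 0.
Proof. by move=> t_ge0; rewrite gt_eqF ?sqrtu_gt0. Qed.

Lemma sqrtu_sqr t y : 0 <= t -> sqrtu t y * sqrtu t y = u y t.
Proof. by move=> t_ge0; rewrite -expr2 sqr_sqrtr // ltW ?u_gt0. Qed.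

Lemma is_derive_u t y : 0 < t -> is_derive t 1 (u y) (Lap (fun z => u z t) y).
Proof.
move=> t_gt0; have [du <-] := u_heat y t t_gt0.
by rewrite derive1E; apply: derivableP.
Qed.

Lemma is_derive_sqrtu t y : 0 < t -> is_derive t 1 (fun s => sqrtu s y) (dsqrtu t y).
Proof.
move=> t_gt0; have t_ge0 := ltW t_gt0.
have := is_derive_sqrt_comp (u_gt0 y t t_ge0) (is_derive_u t y t_gt0).
move/is_derive_eq; apply.
rewrite -/(sqrtu t y) (@eq_lap _ _ adj w mu _ (fun z => sqrtu t z * sqrtu t z)).
  by rewrite lap_sqr /dsqrtu; field; rewrite sqrtu_neq0.
by move=> z; rewrite sqrtu_sqr.
Qed.

Lemma is_derive_phi t x : 0 < t -> is_derive t 1 (fun s => phi s x)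
  (-2 * (dsqrtu t x * Lap (sqrtu t) x + sqrtu t x * Lap (dsqrtu t) x)).
Proof.
move=> t_gt0; apply: is_derive_scale; apply: is_derive_eq.
  apply: is_derive_mul; first exact: is_derive_sqrtu.
  by apply: is_derive_lap => y; exact: is_derive_sqrtu.
by rewrite addrC mulrC.
Qed.

Lemma heat_ratio_eq_liyau t x : 0 < t ->
  Gamma (fun y => Num.sqrt (u y t)) (fun y => Num.sqrt (u y t)) x / u x t
    - derive1 (fun s => Num.sqrt (u x s)) t / Num.sqrt (u x t) = liyau t x.
Proof.
move=> t_gt0; have t_ge0 := ltW t_gt0.
have dsqrt := is_derive_sqrtu t x t_gt0.
rewrite derive1E (_ : 'D_1 _ t = dsqrtu t x); last exact: derive_val.
rewrite -/(sqrtu t x) -/(sqrtu t) -(sqrtu_sqr t x t_ge0).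
by rewrite /dsqrtu /liyau; field; rewrite sqrtu_neq0.
Qed.

Lemma phi_weighted e t y : 0 <= t -> (t - e) * phi t y = u y t * weighted_liyau e t y.
Proof.
move=> t_ge0; rewrite /phi /weighted_liyau /liyau -sqrtu_sqr //.
by field; rewrite sqrtu_neq0.
Qed.

Lemma derivable_weighted_liyau e t x : 0 < t ->
  derivable (fun s => weighted_liyau e s x) t 1.
Proof.
move=> t_gt0.
have dlap := is_derive_lap adj w mu x (fun y => is_derive_sqrtu t y t_gt0).
have dinv := @is_deriveV _ (sqrtu^~ x) t _ 1
  (sqrtu_neq0 t x (ltW t_gt0)) (is_derive_sqrtu t x t_gt0).
have dtime := is_derive_sub (is_derive_id t 1) (is_derive_cst e t 1).
have [+ _] := is_derive_mul (is_derive_scale 2 dtime)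
  (is_derive_mul (is_derive_scale (-1) dlap) dinv).
by under eq_fun do rewrite mulN1r.
Qed.

Section AtMaximum.
Variables (e t0 : R) (x0 : V).
Hypotheses (e_ge0 : 0 <= e) (e_lt : e < t0)
  (x0_max : forall y s, e < s -> s <= t0 -> weighted_liyau e s y <= weighted_liyau e t0 x0).
Local Notation F0 := (weighted_liyau e t0 x0).
Local Notation f := (sqrtu t0).

Let t0_gt0 : 0 < t0. Proof. exact: le_lt_trans e_lt. Qed.

Lemma time_derivative_at_max :
  F0 * Lap (fun z => u z t0) x0 <= phi t0 x0
    + (t0 - e) * (-2 * (dsqrtu t0 x0 * Lap f x0 + f x0 * Lap (dsqrtu t0) x0)).
Proof.
have dtime := is_derive_sub (is_derive_id t0 1) (is_derive_cst e t0 1).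
have dg := is_derive_sub (is_derive_mul dtime (is_derive_phi t0 x0 t0_gt0))
  (is_derive_scale F0 (is_derive_u t0 x0 t0_gt0)).
have := is_derive_ge0_left_max e_lt dg; rewrite /cst /= subr0 mulr1.
suff /[swap]/[apply] : forall s, e < s -> s <= t0 ->
  (s - e) * phi s x0 - F0 * u x0 s <= (t0 - e) * phi t0 x0 - F0 * u x0 t0 by lra.
move=> s es st0; have s_ge0 : 0 <= s by rewrite ltW // (le_lt_trans e_ge0).
rewrite !phi_weighted ?(ltW t0_gt0) // [F0 * u x0 t0]mulrC subrr subr_le0 [F0 * _]mulrC.
by apply: ler_wpM2l; [exact/ltW/u_gt0 | exact: x0_max].
Qed.

Lemma lap_phi_at_max : (t0 - e) * Lap (phi t0) x0 <= F0 * Lap (fun z => u z t0) x0.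
Proof.
rewrite -!lapZ; apply: lap_le_at => // [y _|]; rewrite phi_weighted ?(ltW t0_gt0) //.
  rewrite [F0 * _]mulrC; apply: ler_wpM2l; first exact/ltW/u_gt0/ltW.
  exact: x0_max.
exact: mulrC.
Qed.

Lemma Gam2t_le_at_max : 4 * (t0 - e) * Gam2t adj w mu f x0 <= phi t0 x0.
Proof.
have := @Gam2tE _ _ adj w mu f x0 (fun z => sqrtu_neq0 t0 z (ltW t0_gt0)).
rewrite -/(dsqrtu t0) -/(phi t0) => bochner.
have := time_derivative_at_max; have := lap_phi_at_max.
set P := dsqrtu t0 x0 * Lap f x0 + f x0 * Lap (dsqrtu t0) x0.
rewrite [4 * _ * _]mulrAC bochner -/P.
have -> : (Lap (phi t0) x0 + 2 * P) * (t0 - e) =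
  (t0 - e) * Lap (phi t0) x0 + 2 * ((t0 - e) * P) by ring.
have -> : (t0 - e) * (-2 * P) = -2 * ((t0 - e) * P) by ring.
lra.
Qed.

Lemma liyau_le_at_max : 0 < F0 ->
  liyau t0 x0 <= n / (2 * (t0 - e)) + Num.sqrt (n * (K * Dgam adj w mu)).
Proof.
move=> F0_gt0; have f_gt0 z : 0 < f z by exact: sqrtu_gt0 (ltW t0_gt0).
have lapf_le0 : Lap f x0 <= 0.
  move: F0_gt0; rewrite /weighted_liyau pmulr_rgt0; last by rewrite mulr_gt0 // subr_gt0.
  by rewrite /liyau pmulr_lgt0 ?invr_gt0 // oppr_gt0 => /ltW.
apply: (ratio_le_of_curvature_dimension (G := Gamma f f x0) (Q := Gam2t adj w mu f x0)).
- exact: n_gt0.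
- exact: ltW.
- exact: Dgam_ge0.
- by rewrite subr_gt0.
- exact: f_gt0.
- exact: Gam_le_Dgam.
- exact: cde.
- exact: Gam2t_le_at_max.
Qed.

End AtMaximum.

Lemma liyau_le_shifted e T x : 0 < e -> e < T ->
  liyau T x <= n / (2 * (T - e)) + Num.sqrt (n * (K * Dgam adj w mu)).
Proof.
move=> e_gt0 e_lt_T; set S := Num.sqrt _.
have S_ge0 : 0 <= S by exact: sqrtr_ge0.
have Te_gt0 : 0 < 2 * (T - e) by rewrite mulr_gt0 // subr_gt0.
have cont y : {within `[e, T], continuous (fun s => weighted_liyau e s y)}.
  apply: derivable_within_continuous => s; rewrite in_itv /= => /andP[es _].
  exact/derivable_weighted_liyau/(lt_le_trans e_gt0 es).
have time_max y : exists t, t \in `[e, T] /\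
    forall s, s \in `[e, T] -> weighted_liyau e s y <= weighted_liyau e t y.
  by have [t ? ?] := EVT_max (ltW e_lt_T) (cont y); exists t.
have [tmax tmaxP] := choice time_max.
have [x0 _ x0_max] := @arg_maxP _ _ V x predT (fun y => weighted_liyau e (tmax y) y) isT.
set t0 := tmax x0; set F0 := weighted_liyau e t0 x0.
have [+ _] := tmaxP x0; rewrite in_itv /= => /andP[e_le_t0 t0_le_T].
have F_le s y : e <= s -> s <= T -> weighted_liyau e s y <= F0.
  move=> es sT; have [_ tmax_max] := tmaxP y.
  by apply: le_trans (tmax_max s _) (x0_max y _); rewrite ?in_itv /= ?es.
rewrite -(ler_pM2l Te_gt0) mul_div_add //.
apply: le_trans (F_le T x (ltW e_lt_T) (lexx T)) _.
have [F0_le0 | F0_gt0] := lerP F0 0.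
  by apply: le_trans F0_le0 (addr_ge0 (ltW n_gt0) (mulr_ge0 (ltW Te_gt0) S_ge0)).
have e_lt_t0 : e < t0.
  rewrite lt_neqAle e_le_t0 andbT; apply: contraTneq F0_gt0 => e_t0.
  by rewrite /F0 /weighted_liyau -e_t0 subrr mulr0 mul0r ltxx.
have t0e_gt0 : 0 < 2 * (t0 - e) by rewrite mulr_gt0 // subr_gt0.
have := @liyau_le_at_max e t0 x0 (ltW e_gt0) e_lt_t0
  (fun y s es st0 => F_le s y (ltW es) (le_trans st0 t0_le_T)) F0_gt0.
rewrite -(ler_pM2l t0e_gt0) mul_div_add // -/F0 => /le_trans; apply.
by rewrite lerD2l ler_wpM2r // ler_pM2l // lerB.
Qed.

End LiYau.

Theorem mainTheorem1 (R : realType) (V : finType) (adj : rel V)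
  (w : V -> V -> R) (mu : V -> R) (n K : R) (u : V -> R -> R) :
  (forall x y, adj x y = adj y x) ->
  irreflexive adj ->
  (forall x y, connect adj x y) ->
  (forall x y, adj x y -> 0 < w x y) ->
  (forall x, 0 < mu x) ->
  0 < n -> 0 < K ->
  CDE adj w mu n (- K) ->
  (forall x t, 0 <= t -> 0 < u x t) ->
  (forall x t, 0 < t -> derivable (u x) t 1 /\
       derive1 (u x) t = lap adj w mu (fun y => u y t) x) ->
  (forall x, (fun h => h^-1 * (u x h - u x 0)) @ 0^'+
               --> lap adj w mu (fun y => u y 0) x) ->
  forall x t, 0 < t ->
    Gam adj w mu (fun y => Num.sqrt (u y t)) (fun y => Num.sqrt (u y t)) x / u x t
    - derive1 (fun s => Num.sqrt (u x s)) t / Num.sqrt (u x t)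
    <= n / (2 * t) + Num.sqrt (n * K * Dmu adj w mu * (Dw adj w + 1) / 2).
Proof.
move=> _ _ _ w_gt0 mu_gt0 n_gt0 K_gt0 cde u_gt0 u_heat _ x t t_gt0.
rewrite heat_ratio_eq_liyau //.
rewrite (_ : n * K * _ * _ / 2 = n * (K * Dgam adj w mu)); last by rewrite /Dgam; ring.
rewrite (_ : n / (2 * t) = n / 2 / t); last by field; rewrite gt_eqF.
apply: le_of_le_shifted_div; rewrite ?divr_gt0 // => e e_gt0 e_lt_t.
rewrite (_ : n / 2 / (t - e) = n / (2 * (t - e))); last by field; rewrite gt_eqF ?subr_gt0.
exact: liyau_le_shifted.
Qed.
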